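(* Let $(W,S)$ be a Coxeter system with $S$ finite, $\phi:\operatorname{Ad}(Q_W)\to W$ the homomorphism $e_x\mapsto x$, and $C_W=\ker\phi$. Then the central extension $1\to C_W\to\operatorname{Ad}(Q_W)\xrightarrow{\phi}W\to1$ is nontrivial (i.e. not split as a direct product $C_W\times W$); equivalently its class $u_\phi\in H^2(W,C_W)$ is nonzero.
   Context: A Coxeter system $(W,S)$: $S$ finite, $m:S\times S\to\mathbb{N}\cup\{\infty\}$ with $m(s,s)=1$, $2\le m(s,t)=m(t,s)\le\infty$ for $s\ne t$, $W=\langle s\in S\mid (st)^{m(s,t)}=1\ (m(s,t)<\infty)\rangle$. The Coxeter quandle is $Q_W=\bigcup_{w\in W}w^{-1}Sw$ with $x\ast y=yxy$, and $\operatorname{Ad}(Q_W)=\langle e_x\ (x\in Q_W)\mid e_y^{-1}e_xe_y=e_{x\ast y}\rangle$. $C_W$ is a central subgroup of $\operatorname{Ad}(Q_W)$. *)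

From HB Require Import structures.
From mathcomp Require Import all_boot.
Set Implicit Arguments. Unset Strict Implicit. Unset Printing Implicit Defensive.

Local Open Scope group_scope.

Definition is_group_hom (G H : groupType) (f : G -> H) : Prop :=
  forall x y : G, f (x * y) = f x * f y.

(* Coxeter matrix on a finite set S; [None] encodes m(s,t) = infinity. *)
Definition coxeter_matrix (S : finType) (m : S -> S -> option nat) : Prop :=
  [/\ forall s, m s s = Some 1%N,
      forall s t, m s t = m t s
    & forall s t k, s <> t -> m s t = Some k -> (2 <= k)%N].

Definition coxeter_rels (S : finType) (m : S -> S -> option nat)
    (H : groupType) (f : S -> H) : Prop :=
  forall s t k, m s t = Some k -> (f s * f t) ^+ k = 1.

Definition is_coxeter_group (S : finType) (m : S -> S -> option nat)
    (W : groupType) (sW : S -> W) : Prop :=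
  coxeter_rels m sW /\
  forall (H : groupType) (f : S -> H), coxeter_rels m f ->
    exists g : W -> H,
      [/\ is_group_hom g, forall s, g (sW s) = f s
        & forall g' : W -> H, is_group_hom g' -> (forall s, g' (sW s) = f s) ->
            forall w, g' w = g w].

Definition in_coxeter_quandle (S : finType) (W : groupType) (sW : S -> W)
    (x : W) : Prop :=
  exists (w : W) (s : S), x = w^-1 * sW s * w.

Definition adjoint_rels (W : groupType) (Q : W -> Prop)
    (H : groupType) (f : W -> H) : Prop :=
  forall x y, Q x -> Q y -> (f y)^-1 * f x * f y = f (y * x * y).

(* (A, e) is Ad(Q) = < e_x (x in Q) | e_y^-1 e_x e_y = e_{x*y} >, given by its
   universal property (only the values of e on Q are relevant). *)
Definition is_adjoint_group (W : groupType) (Q : W -> Prop)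
    (A : groupType) (e : W -> A) : Prop :=
  adjoint_rels Q e /\
  forall (H : groupType) (f : W -> H), adjoint_rels Q f ->
    exists g : A -> H,
      [/\ is_group_hom g, forall x, Q x -> g (e x) = f x
        & forall g' : A -> H, is_group_hom g' -> (forall x, Q x -> g' (e x) = f x) ->
            forall a, g' a = g a].

(* Let eps : W -> {1, -1} be the sign character (s |-> -1) and d : Ad(Q_W) -> Z/4
   the degree (e_x |-> 1); identify {1, -1} with the subgroup {0, 2} of Z/4.
   Both eps o phi and a |-> 2 d(a) are homomorphisms sending every e_x to -1,
   so they coincide.  A splitting sigma of phi would then give, for s in S,
   -1 = eps(s) = 2 d(sigma s) = d(sigma (s^2)) = d(1) = 0. *)
From HB Require Import structures.
From mathcomp Require Import all_boot.
From mathcomp Require Import zmodp.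

Set Implicit Arguments.
Unset Strict Implicit.
Unset Printing Implicit Defensive.

Local Open Scope group_scope.

Lemma group_hom1 (G H : groupType) (f : G -> H) : is_group_hom f -> f 1 = 1.
Proof. by move=> fM; apply: (@mulgI _ (f 1)); rewrite -fM !mulg1. Qed.

Lemma group_homV (G H : groupType) (f : G -> H) :
  is_group_hom f -> forall x, f x^-1 = (f x)^-1.
Proof.
by move=> fM x; apply: (@mulgI _ (f x)); rewrite -fM !mulgV (group_hom1 fM).
Qed.

Lemma group_hom_comp (G H K : groupType) (f : G -> H) (g : H -> K) :
  is_group_hom f -> is_group_hom g -> is_group_hom (fun x => g (f x)).
Proof. by move=> fM gM x y; rewrite fM gM. Qed.

Section AbelianTarget.

Variables (H : groupType) (mulHC : forall a b : H, commute a b).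

Lemma sqr_group_hom : is_group_hom (fun a : H => a * a).
Proof.
move=> a b; rewrite -!mulgA; congr (_ * _).
by rewrite !mulgA; congr (_ * _); apply: mulHC.
Qed.

Lemma group_hom_conj (G : groupType) (f : G -> H) :
  is_group_hom f -> forall x w, f (w^-1 * x * w) = f x.
Proof.
move=> fM x w; rewrite !fM (group_homV fM) [_ * f x]mulHC -mulgA mulVg.
exact: mulg1.
Qed.

End AbelianTarget.

Lemma coxeter_gen_involution (S : finType) (m : S -> S -> option nat)
    (W : groupType) (sW : S -> W) :
  coxeter_matrix m -> is_coxeter_group m sW -> forall s, sW s * sW s = 1.
Proof. by move=> [m_diag _ _] [rels _] s; have := rels s s 1%N (m_diag s). Qed.

Lemma coxeter_cst_hom (S : finType) (m : S -> S -> option nat)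
    (W : groupType) (sW : S -> W) (H : groupType) (z : H) :
  is_coxeter_group m sW -> z * z = 1 ->
  exists eps : W -> H, is_group_hom eps /\ forall s, eps (sW s) = z.
Proof.
move=> [_ univ] zz; have rels_z : coxeter_rels m (fun _ => z).
  by move=> s t k _; rewrite zz expg1n.
by have [eps [epsM epsE _]] := univ H _ rels_z; exists eps.
Qed.

Lemma adjoint_rels_cst (W : groupType) (Q : W -> Prop) (H : groupType) (c : H) :
  adjoint_rels Q (fun _ => c).
Proof. by move=> x y _ _; rewrite mulVg mul1g. Qed.

Lemma adjoint_hom_unique (W : groupType) (Q : W -> Prop) (A : groupType)
    (e : W -> A) (H : groupType) (f : W -> H) (g1 g2 : A -> H) :
  is_adjoint_group Q e -> adjoint_rels Q f ->
  is_group_hom g1 -> (forall x, Q x -> g1 (e x) = f x) ->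
  is_group_hom g2 -> (forall x, Q x -> g2 (e x) = f x) ->
  forall a, g1 a = g2 a.
Proof.
move=> [_ univ] rels_f g1M g1E g2M g2E a.
have [g [_ _ g_unique]] := univ H f rels_f.
by rewrite (g_unique g1) // (g_unique g2).
Qed.

Section SplittingObstruction.

Variables (S : finType) (m : S -> S -> option nat) (W : groupType) (sW : S -> W).
Variables (A : groupType) (e : W -> A) (phi : A -> W).
Hypothesis Wcox : is_coxeter_group m sW.
Hypothesis Aadj : is_adjoint_group (in_coxeter_quandle sW) e.
Hypothesis phiM : is_group_hom phi.
Hypothesis phiE : forall x, in_coxeter_quandle sW x -> phi (e x) = x.

Variables (H : groupType) (mulHC : forall a b : H, commute a b) (c : H).
Hypothesis c_order4 : (c * c) * (c * c) = 1.

Lemma sign_phi_eq_sqr_degree :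
  exists (eps : W -> H) (deg : A -> H),
    [/\ forall s, eps (sW s) = c * c, is_group_hom deg
      & forall a, eps (phi a) = deg a * deg a].
Proof.
have [eps [epsM epsE]] := coxeter_cst_hom Wcox c_order4.
have [_ univ] := Aadj.
have [deg [degM degE _]] := univ H _ (adjoint_rels_cst c).
exists eps, deg; split=> // a.
apply: (adjoint_hom_unique (g1 := fun a => eps (phi a))
  (g2 := fun a => deg a * deg a) Aadj (adjoint_rels_cst (c * c))).
- exact: group_hom_comp.
- move=> _ [w [s ->]]; rewrite phiE; last by exists w, s.
  by rewrite (group_hom_conj mulHC epsM) epsE.
- exact: group_hom_comp (sqr_group_hom mulHC).
- by move=> x Qx; rewrite degE.
Qed.

Lemma split_sqr_eq1 (sigma : W -> A) (s : S) :
  coxeter_matrix m -> is_group_hom sigma -> (forall w, phi (sigma w) = w) ->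
  c * c = 1.
Proof.
move=> mcox sigmaM sigmaK.
have [eps [deg [epsE degM eps_phi]]] := sign_phi_eq_sqr_degree.
rewrite -(epsE s) -(sigmaK (sW s)) eps_phi -degM -sigmaM.
rewrite (coxeter_gen_involution mcox Wcox) (group_hom1 sigmaM).
exact: group_hom1.
Qed.

End SplittingObstruction.

Theorem lemma4p1 (S : finType) (m : S -> S -> option nat)
    (W : groupType) (sW : S -> W) (A : groupType) (e : W -> A) (phi : A -> W) :
  coxeter_matrix m ->
  (0 < #|S|)%N ->
  is_coxeter_group m sW ->
  is_adjoint_group (in_coxeter_quandle sW) e ->
  is_group_hom phi ->
  (forall x, in_coxeter_quandle sW x -> phi (e x) = x) ->
  ~ (exists sigma : W -> A, is_group_hom sigma /\ forall w, phi (sigma w) = w).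
Proof.
move=> mcox /card_gt0P [s _] Wcox Aadj phiM phiE [sigma [sigmaM sigmaK]].
pose c : 'I_4 := inZp 1.
have c_order4 : (c * c) * (c * c) = 1 by apply/eqP.
by move/eqP: (split_sqr_eq1 Wcox Aadj phiM phiE (@Zp_mulgC _) c_order4 s
  mcox sigmaM sigmaK).
Qed.
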